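(* Consider any sequences $\{(x_k,y_k,\gamma_k)\}_{k\ge0}$, $\{(\tilde x_k,u_k,\tilde\gamma_k)\}_{k\ge1}$ generated by the inexact symmetric proximal ADMM described in the context, and let $z_k=(x_k,y_k,\gamma_k)$ ($k\ge0$), $\tilde z_k=(\tilde x_k,y_k,\tilde\gamma_k)$ ($k\ge1$). Then for every $z^*\in T^{-1}(0)$ and every $k\ge1$, $$\|z^*-z_k\|_M^2-\|z^*-z_{k-1}\|_M^2\le\|\tilde z_k-z_k\|_M^2-\|\tilde z_k-z_{k-1}\|_M^2.$$
   Context: Let $f:\mathbb{R}^n\to(-\infty,\infty]$ and $g:\mathbb{R}^p\to(-\infty,\infty]$ be proper closed convex functions, $A\in\mathbb{R}^{m\times n}$, $B\in\mathbb{R}^{m\times p}$, $b\in\mathbb{R}^m$ (problem: $\min\{f(x)+g(y):Ax+By=b\}$). Standing assumption: there exists $(x^*,y^*,\gamma^* )$ solving the Lagrangian system $0\in\partial f(x)-A^*\gamma$, $0\in\partial g(y)-B^*\gamma$, $0=Ax+By-b$. Here $\partial$ is the subdifferential, $A^*$ the transpose, $\mathbb{S}^n_{++}$ ($\mathbb{S}^p_+$) the symmetric positive definite (semidefinite) matrices, and $\|z\|_Q=\sqrt{\langle Qz,z\rangle}$ for $Q$ positive semidefinite. Algorithm (inexact symmetric proximal ADMM): given $(x_0,y_0,\gamma_0)\in\mathbb{R}^n\times\mathbb{R}^p\times\mathbb{R}^m$, $\beta>0$, $\tilde\sigma,\hat\sigma\in[0,1)$, $G\in\mathbb{S}^n_{++}$,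 $H\in\mathbb{S}^p_+$, and $(\tau,\theta)\in\mathcal R_{\tilde\sigma}:=\{(\tau,\theta):\tau\in(-1,1-\tilde\sigma),\ \tau+\theta>0,\ (1-\tau^2)(2-\tau-\theta-\tilde\sigma)-(1-\theta)^2(1-\tau-\tilde\sigma)>0\}$. For $k=1,2,\dots$: compute $(\tilde x_k,u_k)$ with $u_k\in\partial f(\tilde x_k)-A^*\tilde\gamma_k$ and $\|\tilde x_k-x_{k-1}+G^{-1}u_k\|_G^2\le\frac{\tilde\sigma}{\beta}\|\tilde\gamma_k-\gamma_{k-1}\|^2+\hat\sigma\|\tilde x_k-x_{k-1}\|_G^2$, where $\tilde\gamma_k=\gamma_{k-1}-\beta(A\tilde x_k+By_{k-1}-b)$; set $\gamma_{k-1/2}=\gamma_{k-1}-\tau\beta(A\tilde x_k+By_{k-1}-b)$; let $y_k$ be an optimal solution of $\min_y\{g(y)-\langle\gamma_{k-1/2},By\rangle+\frac\beta2\|A\tilde x_k+By-b\|^2+\frac12\|y-y_{k-1}\|_H^2\}$; set $x_k=x_{k-1}-G^{-1}u_k$ and $\gamma_k=\gamma_{k-1/2}-\theta\beta(A\tilde x_k+By_k-b)$. Definitions: $T(x,y,\gamma)=(\partial f(x)-A^*\gamma,\ \partial g(y)-B^*\gamma,\ Ax+By-b)$; $M=\begin{bmatrix}G&0&0\\0&H+\frac{(\tau-\tau\theta+\theta)\beta}{\tau+\theta}B^*B&-\frac{\tau}{\tau+\theta}B^*\\0&-\frac{\tau}{\tau+\theta}B&\frac{1}{(\tau+\theta)\beta}I\end{bmatrix}$.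 *)

From mathcomp Require Import all_boot all_order all_algebra.
From mathcomp Require Import all_classical all_reals.
Set Implicit Arguments. Unset Strict Implicit. Unset Printing Implicit Defensive.
Import Order.TTheory GRing.Theory Num.Theory.
Local Open Scope ring_scope.

Section Defs.
Variable R : realType.

Definition dotv (n : nat) (a b : 'cV[R]_n) : R := (a^T *m b) 0 0.

Definition sqnormQ (n : nat) (Q : 'M[R]_n) (z : 'cV[R]_n) : R :=
  dotv (Q *m z) z.

Definition symmetric_mx (n : nat) (Q : 'M[R]_n) : Prop := Q^T = Q.
Definition posdef (n : nat) (Q : 'M[R]_n) : Prop :=
  symmetric_mx Q /\ forall z : 'cV[R]_n, z != 0 -> (0 < dotv (Q *m z) z)%R.
Definition possemidef (n : nat) (Q : 'M[R]_n) : Prop :=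
  symmetric_mx Q /\ forall z : 'cV[R]_n, (0 <= dotv (Q *m z) z)%R.

Definition proper_fun (n : nat) (f : 'cV[R]_n -> \bar R) : Prop :=
  (forall x, f x != -oo%E) /\ exists x, f x \is a fin_num.

(* closed = lower semicontinuous (coordinatewise neighbourhoods) *)
Definition closed_fun (n : nat) (f : 'cV[R]_n -> \bar R) : Prop :=
  forall (x : 'cV[R]_n) (a : R), (a%:E < f x)%E ->
    exists2 e : R, (0 < e)%R &
      forall y : 'cV[R]_n, (forall i, `|y i 0 - x i 0| < e)%R -> (a%:E < f y)%E.

Definition convex_fun (n : nat) (f : 'cV[R]_n -> \bar R) : Prop :=
  forall (x y : 'cV[R]_n) (t : R), (0 < t)%R -> (t < 1)%R ->
    (f (t *: x + (1 - t) *: y)%R <= t%:E * f x + (1 - t)%:E * f y)%E.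

Definition subgrad (n : nat) (f : 'cV[R]_n -> \bar R) (x v : 'cV[R]_n) : Prop :=
  f x \is a fin_num /\
  forall y : 'cV[R]_n, (f x + (dotv v (y - x))%:E <= f y)%E.

Definition zero_of_T (n p m : nat) (f : 'cV[R]_n -> \bar R) (g : 'cV[R]_p -> \bar R)
  (A : 'M[R]_(m, n)) (B : 'M[R]_(m, p)) (b : 'cV[R]_m)
  (x : 'cV[R]_n) (y : 'cV[R]_p) (gam : 'cV[R]_m) : Prop :=
  subgrad f x (A^T *m gam) /\ subgrad g y (B^T *m gam) /\
  (A *m x + B *m y - b = 0)%R.

Definition in_region (sig tau theta : R) : Prop :=
  (-1 < tau)%R /\ (tau < 1 - sig)%R /\ (0 < tau + theta)%R /\
  (0 < (1 - tau ^+ 2) * (2 - tau - theta - sig)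
       - (1 - theta) ^+ 2 * (1 - tau - sig))%R.

Definition stack3 (n p m : nat) (x : 'cV[R]_n) (y : 'cV[R]_p) (gam : 'cV[R]_m)
  : 'cV[R]_(n + p + m) := col_mx (col_mx x y) gam.

Definition Mmat (n p m : nat) (G : 'M[R]_n) (H : 'M[R]_p) (B : 'M[R]_(m, p))
  (beta tau theta : R) : 'M[R]_(n + p + m) :=
  (block_mx
     (block_mx G 0 0
        (H + ((tau - tau * theta + theta) * beta / (tau + theta)) *: (B^T *m B)))
     (col_mx (0 : 'M[R]_(n, m)) (- (tau / (tau + theta)) *: B^T))
     (row_mx (0 : 'M[R]_(m, n)) (- (tau / (tau + theta)) *: B))
     ((1 / ((tau + theta) * beta)) *: 1%:M))%R.

Definition ysub_obj (n p m : nat) (g : 'cV[R]_p -> \bar R)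
  (A : 'M[R]_(m, n)) (B : 'M[R]_(m, p)) (b : 'cV[R]_m) (H : 'M[R]_p) (beta : R)
  (gamhalf : 'cV[R]_m) (xt : 'cV[R]_n) (yprev : 'cV[R]_p) (y : 'cV[R]_p) : \bar R :=
  (g y + (- dotv gamhalf (B *m y)
         + beta / 2 * dotv (A *m xt + B *m y - b) (A *m xt + B *m y - b)
         + 1 / 2 * sqnormQ H (y - yprev))%:E)%E.

(* The sequences (x_k,y_k,gam_k)_{k>=0}, (xt_k,u_k,gamt_k)_{k>=1}
   are generated by the inexact symmetric proximal ADMM. Values of
   xt, u, gamt at index 0 are irrelevant. *)
Definition isp_admm (n p m : nat) (f : 'cV[R]_n -> \bar R) (g : 'cV[R]_p -> \bar R)
  (A : 'M[R]_(m, n)) (B : 'M[R]_(m, p)) (b : 'cV[R]_m)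
  (beta sigt sigh tau theta : R) (G : 'M[R]_n) (H : 'M[R]_p)
  (x : nat -> 'cV[R]_n) (y : nat -> 'cV[R]_p) (gam : nat -> 'cV[R]_m)
  (xt : nat -> 'cV[R]_n) (u : nat -> 'cV[R]_n) (gamt : nat -> 'cV[R]_m) : Prop :=
  forall k : nat, (0 < k)%N ->
    [/\ gamt k = (gam k.-1 - beta *: (A *m xt k + B *m y k.-1 - b))%R,
        subgrad f (xt k) (u k + A^T *m gamt k)%R,
        (sqnormQ G (xt k - x k.-1 + invmx G *m u k)
          <= sigt / beta * dotv (gamt k - gam k.-1) (gamt k - gam k.-1)
             + sigh * sqnormQ G (xt k - x k.-1))%R,
        (let gamhalf := (gam k.-1 - (tau * beta) *: (A *m xt k + B *m y k.-1 - b))%R in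
         (forall y' : 'cV[R]_p,
            (ysub_obj g A B b H beta gamhalf (xt k) (y k.-1) (y k)
            <= ysub_obj g A B b H beta gamhalf (xt k) (y k.-1) y')%E)
         /\ gam k = (gamhalf - (theta * beta) *: (A *m xt k + B *m y k - b))%R) &
        x k = (x k.-1 - invmx G *m u k)%R].

End Defs.

(* In the M-norm, the polarization identity
     |a - c|^2 - |a - d|^2 - (|e - c|^2 - |e - d|^2) = 2 <M (d - c), a - e>
   reduces the claim to <M (z_{k-1} - z_k), z~_k - z*> >= 0.  Unwinding the
   update rules gives M (z_{k-1} - z_k) = (u_k, v_k, A x~_k + B y_k - b), where
   v_k + B^T gam~_k is a subgradient of g at y_k by first-order optimality of the
   y-subproblem; that is, M (z_{k-1} - z_k) lies in T(z~_k).  As T z* contains 0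
   and T is monotone (subdifferentials are monotone and the coupling part of T is
   skew), the claim follows. *)

From mathcomp Require Import all_boot all_order all_algebra.
From mathcomp Require Import all_classical all_reals.
From mathcomp Require Import ring lra.
Set Implicit Arguments. Unset Strict Implicit. Unset Printing Implicit Defensive.
Import Order.TTheory GRing.Theory Num.Theory.
Local Open Scope ring_scope.

Section InnerProduct.
Variable R : realType.
Implicit Types (k : R).

Lemma dotvC n (a b : 'cV[R]_n) : dotv a b = dotv b a.
Proof. by rewrite /dotv -[b^T *m a]trmxK trmx_mul trmxK [in RHS]mxE. Qed.

Lemma dotvDl n (a b c : 'cV[R]_n) : dotv (a + b) c = dotv a c + dotv b c.
Proof. by rewrite /dotv linearD mulmxDl mxE. Qed.

Lemma dotvZl n k (a c : 'cV[R]_n) : dotv (k *: a) c = k * dotv a c.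
Proof. by rewrite /dotv linearZ -scalemxAl mxE. Qed.

Lemma dotvNl n (a c : 'cV[R]_n) : dotv (- a) c = - dotv a c.
Proof. by rewrite -scaleN1r dotvZl mulN1r. Qed.

Lemma dotvDr n (a b c : 'cV[R]_n) : dotv c (a + b) = dotv c a + dotv c b.
Proof. by rewrite dotvC dotvDl !(dotvC c). Qed.

Lemma dotvZr n k (a c : 'cV[R]_n) : dotv c (k *: a) = k * dotv c a.
Proof. by rewrite dotvC dotvZl dotvC. Qed.

Lemma dotvNr n (a c : 'cV[R]_n) : dotv c (- a) = - dotv c a.
Proof. by rewrite dotvC dotvNl dotvC. Qed.

Lemma dotv0l n (c : 'cV[R]_n) : dotv 0 c = 0.
Proof. by rewrite -(scale0r (0 : 'cV[R]_n)) dotvZl mul0r. Qed.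

Lemma dotv_mulmxl m n (M : 'M[R]_(m, n)) a b : dotv (M *m a) b = dotv a (M^T *m b).
Proof. by rewrite /dotv trmx_mul mulmxA. Qed.

Lemma dotv_trmxl m n (M : 'M[R]_(m, n)) a b : dotv (M^T *m a) b = dotv a (M *m b).
Proof. by rewrite dotv_mulmxl trmxK. Qed.

Lemma dotv_col_mx n1 n2 (a1 b1 : 'cV[R]_n1) (a2 b2 : 'cV[R]_n2) :
  dotv (col_mx a1 a2) (col_mx b1 b2) = dotv a1 b1 + dotv a2 b2.
Proof. by rewrite /dotv tr_col_mx mul_row_col mxE. Qed.

Lemma dotv_stack3 n p m (x1 x2 : 'cV[R]_n) (y1 y2 : 'cV[R]_p) (g1 g2 : 'cV[R]_m) :
  dotv (stack3 x1 y1 g1) (stack3 x2 y2 g2) = dotv x1 x2 + dotv y1 y2 + dotv g1 g2.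
Proof. by rewrite /stack3 !dotv_col_mx. Qed.

Lemma stack3B n p m (x1 x2 : 'cV[R]_n) (y1 y2 : 'cV[R]_p) (g1 g2 : 'cV[R]_m) :
  stack3 x1 y1 g1 - stack3 x2 y2 g2 = stack3 (x1 - x2) (y1 - y2) (g1 - g2).
Proof. by rewrite /stack3 !opp_col_mx !add_col_mx. Qed.

Lemma sqnormQ_four_point N (M : 'M[R]_N) a c d e : symmetric_mx M ->
  sqnormQ M (a - c) - sqnormQ M (a - d) - (sqnormQ M (e - c) - sqnormQ M (e - d))
  = 2 * dotv (M *m (d - c)) (a - e).
Proof.
move=> Msym.
have MC v w : dotv (M *m v) w = dotv (M *m w) v by rewrite dotv_mulmxl Msym dotvC.
rewrite /sqnormQ !mulmxBr !(dotvDl, dotvDr, dotvNl, dotvNr).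
rewrite (MC a c) (MC a d) (MC e c) (MC e d).
ring.
Qed.

End InnerProduct.

Section Subgradient.
Variable R : realType.

Lemma subgrad_monotone N (h : 'cV[R]_N -> \bar R) x1 x2 v1 v2 :
  subgrad h x1 v1 -> subgrad h x2 v2 -> 0 <= dotv (v1 - v2) (x1 - x2).
Proof.
move=> [h1_fin h1_le] [h2_fin h2_le].
have := h1_le x2; have := h2_le x1.
rewrite -(fineK h1_fin) -(fineK h2_fin) -!EFinD !lee_fin.
rewrite -(opprB x1 x2) dotvNr dotvDl dotvNl; lra.
Qed.

Lemma ler_addtM01 (a L C : R) :
  (forall t, 0 < t -> t < 1 -> a <= L + t * C) -> a <= L.
Proof.
move=> aLC; apply/ler_addgt0Pr => e e0.
have C_ge0 := normr_ge0 C.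
have den_gt0 : 0 < e + `|C| + 1 by lra.
set t := e / (e + `|C| + 1).
have t_gt0 : 0 < t by rewrite divr_gt0.
have t_lt1 : t < 1 by rewrite ltr_pdivrMr // mul1r; lra.
have tC_le : t * C <= e.
  apply: (le_trans (ler_wpM2l (ltW t_gt0) (real_ler_norm (num_real C)))).
  by rewrite /t mulrAC ler_pdivrMr // ler_pM2l //; lra.
by apply: (le_trans (aLC t t_gt0 t_lt1)); rewrite lerD2l.
Qed.

Lemma argmin_add_subgrad N (h : 'cV[R]_N -> \bar R) (q K : 'cV[R]_N -> R) y c :
  proper_fun h -> convex_fun h ->
  (forall z, (h y + (q y)%:E <= h z + (q z)%:E)%E) ->
  (forall d t, q (y + t *: d) = q y + t * dotv c d + t ^+ 2 * K d) ->
  subgrad h y (- c).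
Proof.
move=> [h_nNy [z0 hz0_fin]] h_cvx y_min q_expand.
have hy_fin : h y \is a fin_num.
  rewrite fin_numE h_nNy /=; apply/eqP => hy_inf.
  by have := y_min z0; rewrite hy_inf addye // -(fineK hz0_fin) -EFinD leye_eq.
split=> // z; rewrite -(fineK hy_fin) -EFinD.
case hz: (h z) => [r| |]; [| exact: leey | by have := h_nNy z; rewrite hz].
rewrite lee_fin dotvNl; set d := z - y.
apply: (@ler_addtM01 _ _ (K d)) => t t_gt0 t_lt1.
have segment : t *: z + (1 - t) *: y = y + t *: d.
  by apply/colP => i; rewrite !mxE; ring.
have := h_cvx z y t t_gt0 t_lt1; rewrite segment hz => /(leeD2r (q (y + t *: d))%:E).
move/(le_trans (y_min _)).
rewrite -(fineK hy_fin) -!EFinM -!EFinD lee_fin q_expand; nra.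
Qed.

End Subgradient.

Section MonotoneT.
Variables (R : realType) (n p m : nat).
Variables (f : 'cV[R]_n -> \bar R) (g : 'cV[R]_p -> \bar R).
Variables (A : 'M[R]_(m, n)) (B : 'M[R]_(m, p)) (b : 'cV[R]_m).

Definition graphT x y gam u v w : Prop :=
  [/\ subgrad f x (u + A^T *m gam), subgrad g y (v + B^T *m gam)
    & w = A *m x + B *m y - b].

Lemma zero_of_T_graphT x y gam :
  zero_of_T f g A B b x y gam -> graphT x y gam 0 0 0.
Proof. by move=> [fx [gy feasible]]; split; rewrite ?add0r. Qed.

Lemma graphT_monotone x1 y1 g1 u1 v1 w1 x2 y2 g2 u2 v2 w2 :
  graphT x1 y1 g1 u1 v1 w1 -> graphT x2 y2 g2 u2 v2 w2 ->
  0 <= dotv (stack3 u1 v1 w1 - stack3 u2 v2 w2) (stack3 x1 y1 g1 - stack3 x2 y2 g2).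
Proof.
move=> [fx1 gy1 ->] [fx2 gy2 ->].
have := subgrad_monotone fx1 fx2; have := subgrad_monotone gy1 gy2.
rewrite !stack3B dotv_stack3.
rewrite !(mulmxBr, mulmxDr, dotvDl, dotvDr, dotvNl, dotvNr, dotv_trmxl).
rewrite !(dotvC (A *m _)) !(dotvC (B *m _)).
lra.
Qed.

End MonotoneT.

Section YSubproblem.
Variables (R : realType) (n p m : nat).
Variables (A : 'M[R]_(m, n)) (B : 'M[R]_(m, p)) (b : 'cV[R]_m) (H : 'M[R]_p).
Variables (beta : R) (gamhalf : 'cV[R]_m) (xt : 'cV[R]_n) (yprev : 'cV[R]_p).

Definition ysub_quad (y : 'cV[R]_p) : R :=
  - dotv gamhalf (B *m y)
  + beta / 2 * dotv (A *m xt + B *m y - b) (A *m xt + B *m y - b)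
  + 1 / 2 * sqnormQ H (y - yprev).

Definition ysub_grad (y : 'cV[R]_p) : 'cV[R]_p :=
  - (B^T *m gamhalf) + beta *: (B^T *m (A *m xt + B *m y - b)) + H *m (y - yprev).

Lemma ysub_quad_expansion y d t : symmetric_mx H ->
  ysub_quad (y + t *: d) = ysub_quad y + t * dotv (ysub_grad y) d
    + t ^+ 2 * (beta / 2 * dotv (B *m d) (B *m d) + 1 / 2 * sqnormQ H d).
Proof.
move=> Hsym; rewrite /ysub_quad /ysub_grad /sqnormQ.
have -> : A *m xt + B *m (y + t *: d) - b = (A *m xt + B *m y - b) + t *: (B *m d).
  by rewrite mulmxDr -scalemxAr addrA [LHS]addrAC.
have -> : y + t *: d - yprev = (y - yprev) + t *: d by rewrite addrAC.
move: (A *m xt + B *m y - b) (y - yprev) => w z.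
have Hdz : dotv (H *m d) z = dotv (H *m z) d by rewrite dotv_mulmxl Hsym dotvC.
rewrite !mulmxDr -!scalemxAr !(dotvDl, dotvDr, dotvZl, dotvZr, dotvNl) !dotv_trmxl.
by rewrite Hdz (dotvC (B *m d)); field.
Qed.

Lemma ysub_argmin_subgrad (g : 'cV[R]_p -> \bar R) y :
  proper_fun g -> convex_fun g -> symmetric_mx H ->
  (forall y', (ysub_obj g A B b H beta gamhalf xt yprev y
               <= ysub_obj g A B b H beta gamhalf xt yprev y')%E) ->
  subgrad g y (- ysub_grad y).
Proof.
move=> g_proper g_cvx Hsym y_min.
apply: (argmin_add_subgrad (q := ysub_quad)) => // d t.
exact: ysub_quad_expansion.
Qed.

End YSubproblem.

Section Mmat.
Variables (R : realType) (n p m : nat).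
Variables (G : 'M[R]_n) (H : 'M[R]_p) (B : 'M[R]_(m, p)) (beta tau theta : R).

Lemma Mmat_sym : symmetric_mx G -> symmetric_mx H ->
  symmetric_mx (Mmat G H B beta tau theta).
Proof.
move=> Gsym Hsym; rewrite /symmetric_mx /Mmat.
rewrite !(tr_block_mx, tr_col_mx, tr_row_mx, trmx0, trmx1, linearD, linearZ, trmx_mul) /=.
by rewrite Gsym Hsym trmx_mul trmx1 !trmxK.
Qed.

End Mmat.

Lemma posdef_unitmx (R : realType) n (G : 'M[R]_n) : posdef G -> G \in unitmx.
Proof.
move=> [Gsym G_pos]; rewrite -row_free_unit -kermx_eq0; apply/eqP/row_matrixP => i.
rewrite row0; apply/eqP/negPn/negP => ker_i_neq0.
have Gv : G *m (row i (kermx G))^T = 0.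
  by rewrite -{1}Gsym -trmx_mul -row_mul mulmx_ker row0 trmx0.
have v_neq0 : (row i (kermx G))^T != 0 by rewrite trmx_eq0.
by have := G_pos _ v_neq0; rewrite Gv dotv0l ltxx.
Qed.

Section AdmmStep.
Variables (R : realType) (n p m : nat).
Variables (A : 'M[R]_(m, n)) (B : 'M[R]_(m, p)) (b : 'cV[R]_m).
Variables (G : 'M[R]_n) (H : 'M[R]_p) (beta tau theta : R).
Variables (x0 x1 xt u : 'cV[R]_n) (y0 y1 : 'cV[R]_p) (g0 g1 gt : 'cV[R]_m).

Let r0 := A *m xt + B *m y0 - b.
Let r1 := A *m xt + B *m y1 - b.
Let gh := g0 - (tau * beta) *: r0.

Hypotheses (G_unit : G \in unitmx) (beta_neq0 : beta != 0) (tt_neq0 : tau + theta != 0).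
Hypotheses (gt_def : gt = g0 - beta *: r0) (g1_def : g1 = gh - (theta * beta) *: r1)
  (x1_def : x1 = x0 - invmx G *m u).

Lemma Mmat_mul_step :
  Mmat G H B beta tau theta *m (stack3 x0 y0 g0 - stack3 x1 y1 g1)
  = stack3 u (- ysub_grad A B b H beta gh xt y0 y1 - B^T *m gt) r1.
Proof.
have dy : B *m (y0 - y1) = r0 - r1.
  rewrite /r0 /r1 mulmxBr; move: (A *m xt) (B *m y0) (B *m y1) => a c d.
  by apply/colP => i; rewrite !mxE; ring.
have dg : g0 - g1 = (tau * beta) *: r0 + (theta * beta) *: r1.
  by rewrite g1_def /gh; apply/colP => i; rewrite !mxE; ring.
rewrite stack3B /stack3 /Mmat.
rewrite !(mul_block_col, mul_row_col, mul_col_mx, mul0mx, add_col_mx, addr0, add0r).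
rewrite !mulmxDl -!scalemxAl -!mulmxA dy dg mul1mx.
congr (col_mx (col_mx _ _) _).
- by rewrite x1_def opprB addrC subrK mulmxA mulmxV // mul1mx.
- (* the B^T r0 coefficients agree since tau - tau theta + theta - tau^2 = (tau + theta)(1 - tau) *)
  rewrite /ysub_grad -/r1 gt_def /gh -(opprB y0) mulmxN.
  move: (r0) (r1) => s0 s1.
  rewrite !(mulmxBr, mulmxDr, mulmxN) -!scalemxAr.
  move: (B^T *m s0) (B^T *m s1) (B^T *m g0) (H *m (y0 - y1)) => v0 v1 w a.
  by apply/colP => i; rewrite !mxE; field.
- move: (r0) (r1) => s0 s1.
  by apply/colP => i; rewrite !mxE; field; rewrite beta_neq0.
Qed.

End AdmmStep.

Theorem lemma2p4 (R : realType) (n p m : nat)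
  (f : 'cV[R]_n -> \bar R) (g : 'cV[R]_p -> \bar R)
  (A : 'M[R]_(m, n)) (B : 'M[R]_(m, p)) (b : 'cV[R]_m)
  (beta sigt sigh tau theta : R) (G : 'M[R]_n) (H : 'M[R]_p)
  (x : nat -> 'cV[R]_n) (y : nat -> 'cV[R]_p) (gam : nat -> 'cV[R]_m)
  (xt : nat -> 'cV[R]_n) (u : nat -> 'cV[R]_n) (gamt : nat -> 'cV[R]_m) :
  proper_fun f -> closed_fun f -> convex_fun f ->
  proper_fun g -> closed_fun g -> convex_fun g ->
  (exists xs ys gs, zero_of_T f g A B b xs ys gs) ->
  0 < beta -> 0 <= sigt < 1 -> 0 <= sigh < 1 ->
  posdef G -> possemidef H -> in_region sigt tau theta ->
  isp_admm f g A B b beta sigt sigh tau theta G H x y gam xt u gamt ->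
  forall (xs : 'cV[R]_n) (ys : 'cV[R]_p) (gs : 'cV[R]_m),
    zero_of_T f g A B b xs ys gs ->
    forall k : nat, (0 < k)%N ->
      let M := Mmat G H B beta tau theta in
      let zs := stack3 xs ys gs in
      let zk := stack3 (x k) (y k) (gam k) in
      let zk1 := stack3 (x k.-1) (y k.-1) (gam k.-1) in
      let ztk := stack3 (xt k) (y k) (gamt k) in
      sqnormQ M (zs - zk) - sqnormQ M (zs - zk1)
        <= sqnormQ M (ztk - zk) - sqnormQ M (ztk - zk1).
Proof.
move=> _ _ _ g_proper _ g_cvx _ beta_gt0 _ _ G_posdef [Hsym _] [_ [_ [tt_gt0 _]]] admm
  xs ys gs zero_s k k_gt0; cbv zeta; set M := Mmat _ _ _ _ _ _.
have [gt_def f_sub _ [y_min g_def] x_def] := admm k k_gt0.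
have Msym : symmetric_mx M by apply: Mmat_sym; [case: G_posdef|].
rewrite -subr_le0 sqnormQ_four_point // -(opprB (stack3 (xt k) _ _)) dotvNr mulrN.
rewrite oppr_le0 pmulr_rge0 //.
rewrite /M (Mmat_mul_step _ (posdef_unitmx G_posdef) (lt0r_neq0 beta_gt0) (lt0r_neq0 tt_gt0)
  gt_def g_def x_def).
have ztk_graph : graphT f g A B b (xt k) (y k) (gamt k) (u k)
    (- ysub_grad A B b H beta (gam k.-1 - (tau * beta) *: (A *m xt k + B *m y k.-1 - b))
       (xt k) (y k.-1) (y k) - B^T *m gamt k) (A *m xt k + B *m y k - b).
  split=> //; rewrite subrK; exact: ysub_argmin_subgrad.
have := graphT_monotone ztk_graph (zero_of_T_graphT zero_s).
by rewrite /stack3 !col_mx0 subr0.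
Qed.
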